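(* Let $d\ge1$, let $G$ be a graph with a nonedge $f=uv$, let $C$ be a clique separator of $G\cup f$, and let $G_1,\dots,G_k$ be the $C$-components of $G\cup f$ that contain both $u$ and $v$. Then $(G,f)$ has the $d$-SIP if and only if $(G_i\setminus f,f)$ has the $d$-SIP for every $i$.
   Context: A linkage $(G,\ell)$: finite simple graph $G$ and $\ell:E(G)\to\mathbb{R}_{\ge0}$ (squared lengths). A $d$-realization is $p:V(G)\to\mathbb{R}^d$ with $\|p(a)-p(b)\|^2=\ell(ab)$ for all $ab\in E(G)$; $\mathcal{C}^d(G,\ell)$ is the set of these. For a nonedge $f=uv$, $\Omega^d_f(G,\ell)=\{\|p(u)-p(v)\|^2:p\in\mathcal{C}^d(G,\ell)\}$; $(G,f)$ has the $d$-SIP if $\Omega^d_f(G,\ell)$ is convex (empty or a closed interval) for every $\ell$. $G\cup f$ adds $f$ as an edge; $H\setminus f$ deletes the edge $f$. A clique is a set of pairwise adjacent vertices; a clique separator of $H$ is a clique $C$ such that $H-C$ has at least two connected components. The $C$-components of $H$ are the subgraphs induced by $V(K)\cup C$ for the connected components $K$ of $H-C$. *)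

From mathcomp Require Import all_boot all_order all_algebra.
From mathcomp Require Import reals.
Set Implicit Arguments. Unset Strict Implicit. Unset Printing Implicit Defensive.
Import Order.TTheory GRing.Theory Num.Theory.
Local Open Scope ring_scope.

Definition sqdist (R : realType) (d : nat) (x y : 'rV[R]_d) : R :=
  \sum_(i < d) (x ord0 i - y ord0 i) ^+ 2.

(* A graph on vertex set S (a subset of the finite type V) with edge
   relation E (only edges with both ends in S count).
   l : squared edge lengths. *)
Definition realization (R : realType) (d : nat) (V : finType)
  (S : {set V}) (E : rel V) (l : V -> V -> R) (p : V -> 'rV[R]_d) : Prop :=
  forall a b, a \in S -> b \in S -> E a b -> sqdist (p a) (p b) = l a b.

Definition Omega (R : realType) (d : nat) (V : finType)
  (S : {set V}) (E : rel V) (l : V -> V -> R) (u v : V) : R -> Prop :=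
  fun t => exists p : V -> 'rV[R]_d, realization S E l p /\ sqdist (p u) (p v) = t.

Definition convexR (R : realType) (A : R -> Prop) : Prop :=
  forall x y z, A x -> A y -> x <= z -> z <= y -> A z.

(* (G, f) has the d-SIP: Omega is convex for every length function
   l : E(G) -> R_{>=0}, encoded as a symmetric nonnegative l : V -> V -> R
   (values off edges are irrelevant). *)
Definition SIP (R : realType) (d : nat) (V : finType)
  (S : {set V}) (E : rel V) (u v : V) : Prop :=
  forall l : V -> V -> R, (forall a b, l a b = l b a) -> (forall a b, 0 <= l a b) ->
    convexR (Omega d S E l u v).

Definition add_edge (V : finType) (E : rel V) (u v : V) : rel V :=
  fun a b => [|| E a b, (a == u) && (b == v) | (a == v) && (b == u)].

Definition del_verts (V : finType) (E : rel V) (C : {set V}) : rel V :=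
  fun a b => [&& E a b, a \notin C & b \notin C].

Definition is_clique (V : finType) (E : rel V) (C : {set V}) : Prop :=
  forall a b, a \in C -> b \in C -> a != b -> E a b.

Definition clique_separator (V : finType) (E : rel V) (C : {set V}) : Prop :=
  is_clique E C /\
  exists x y, [/\ x \notin C, y \notin C & ~~ connect (del_verts E C) x y].

(* vertex set of the C-component of H determined by the component of H - C
   containing x (x \notin C) *)
Definition Ccomp (V : finType) (E : rel V) (C : {set V}) (x : V) : {set V} :=
  [set y | connect (del_verts E C) x y] :|: C.

Definition induced_del (V : finType) (E : rel V) (S : {set V}) (u v : V) : rel V :=
  fun a b => [&& a \in S, b \in S, E a b &
              ~~ (((a == u) && (b == v)) || ((a == v) && (b == u)))].

From mathcomp Require Import all_boot all_order all_algebra.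
From mathcomp Require Import reals.
From mathcomp Require Import ring lra.
Set Implicit Arguments. Unset Strict Implicit. Unset Printing Implicit Defensive.
Import Order.TTheory GRing.Theory Num.Theory.
Local Open Scope ring_scope.

(* Everything hinges on the clique C: in a realization of a C-component with
   u-v distance t all distances inside C are prescribed (by the edge lengths, and by
   t for the pair uv), so realizations of different components differ on C by an
   isometry.  If every component through u and v has the SIP, realize each of them
   with u-v distance t, restrict a realization of G to the other components, move
   all of them onto one placement of C by products of bisector reflections and glue.
   If (G, f) has the SIP, extend two realizations of a component to G by sending
   everything outside it to single points w1, w3 that see C alike: either C has a
   vertex other than u and v, or C = {u, v} and d >= 1 leaves room for such points. *)

Section EuclideanGeometry.
Variables (R : realType) (d : nat).
Implicit Types (x y z w A B : 'rV[R]_d) (k : R).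

Definition dotv x y : R := \sum_(i < d) x ord0 i * y ord0 i.

Lemma dotvC x y : dotv x y = dotv y x.
Proof. by apply: eq_bigr => i _; rewrite mulrC. Qed.

Lemma dotvDl x y z : dotv (x + y) z = dotv x z + dotv y z.
Proof. by rewrite /dotv -big_split; apply: eq_bigr => i _; rewrite !mxE mulrDl. Qed.

Lemma dotvNl x z : dotv (- x) z = - dotv x z.
Proof. by rewrite /dotv -sumrN; apply: eq_bigr => i _; rewrite !mxE mulNr. Qed.

Lemma dotvZl k x z : dotv (k *: x) z = k * dotv x z.
Proof. by rewrite /dotv mulr_sumr; apply: eq_bigr => i _; rewrite !mxE mulrA. Qed.

Lemma dotvBl x y z : dotv (x - y) z = dotv x z - dotv y z.
Proof. by rewrite dotvDl dotvNl. Qed.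

Lemma dotvBr x y z : dotv z (x - y) = dotv z x - dotv z y.
Proof. by rewrite dotvC dotvBl !(dotvC z). Qed.

Lemma dotvZr k x z : dotv z (k *: x) = k * dotv z x.
Proof. by rewrite dotvC dotvZl dotvC. Qed.

Lemma sqdistE x y : sqdist x y = dotv (x - y) (x - y).
Proof. by apply: eq_bigr => i _; rewrite !mxE expr2. Qed.

Lemma sqdistC x y : sqdist x y = sqdist y x.
Proof. by apply: eq_bigr => i _; rewrite -sqrrN opprB. Qed.

Lemma sqdist_ge0 x y : 0 <= sqdist x y.
Proof. by apply: sumr_ge0 => i _; rewrite sqr_ge0. Qed.

Lemma sqdistxx x : sqdist x x = 0.
Proof. by rewrite /sqdist big1 // => i _; rewrite subrr expr0n. Qed.

Lemma sqdist_eq0 x y : sqdist x y = 0 -> x = y.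
Proof.
move=> /eqP; rewrite psumr_eq0 => [/allP xy|i _]; last exact: sqr_ge0.
apply/rowP => j; apply/eqP; rewrite -subr_eq0 -sqrf_eq0.
exact: (implyP (xy j (mem_index_enum j))).
Qed.

Definition isometry (T : 'rV[R]_d -> 'rV[R]_d) := forall x y, sqdist (T x) (T y) = sqdist x y.

Lemma isometry_comp T1 T2 : isometry T1 -> isometry T2 -> isometry (T1 \o T2).
Proof. by move=> iso1 iso2 x y /=; rewrite iso1 iso2. Qed.

Definition bisector_reflection z y w :=
  w - ((sqdist w y - sqdist w z) / sqdist z y) *: (z - y).

Lemma bisector_reflection_isometry z y :
  sqdist z y != 0 -> isometry (bisector_reflection z y).
Proof.
rewrite /bisector_reflection => zy_neq0 a b; rewrite !sqdistE in zy_neq0 *.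
rewrite !(dotvBl, dotvBr, dotvZl, dotvZr) in zy_neq0 *.
rewrite !(dotvC y a, dotvC z a, dotvC y b, dotvC z b, dotvC b a, dotvC z y) in zy_neq0 *.
by field.
Qed.

Lemma bisector_reflection_swap z y : sqdist z y != 0 -> bisector_reflection z y z = y.
Proof.
by move=> zy_neq0; rewrite /bisector_reflection sqdistxx subr0 divff // scale1r opprB addrC subrK.
Qed.

Lemma bisector_reflection_fix z y w :
  sqdist w y = sqdist w z -> bisector_reflection z y w = w.
Proof. by move=> wyz; rewrite /bisector_reflection wyz subrr mul0r scale0r subr0. Qed.

Lemma isometry_extension (T : eqType) (s : seq T) (p q : T -> 'rV[R]_d) :
  {in s &, forall a b, sqdist (p a) (p b) = sqdist (q a) (q b)} ->
  exists2 M, isometry M & {in s, forall a, M (p a) = q a}.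
Proof.
elim: s => [|c s IHs] pq_eq; first by exists id => // ? ?.
have [M isoM Mpq] : exists2 M, isometry M & {in s, forall a, M (p a) = q a}.
  by apply: IHs => a b sa sb; apply: pq_eq; rewrite inE ?sa ?sb orbT.
have Mpc_dist b : b \in s -> sqdist (q b) (M (p c)) = sqdist (q b) (q c).
  by move=> sb; rewrite -{1}(Mpq b sb) isoM pq_eq ?inE ?sb ?eqxx ?orbT.
have [Mpc_qc | Mpc_neq] := eqVneq (sqdist (M (p c)) (q c)) 0.
  exists M => // a; rewrite inE => /predU1P [->|]; last exact: Mpq.
  exact: sqdist_eq0.
exists (bisector_reflection (M (p c)) (q c) \o M).
  exact: isometry_comp (bisector_reflection_isometry Mpc_neq) isoM.
move=> a; rewrite inE => /predU1P [-> | sa] /=; first exact: bisector_reflection_swap.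
by rewrite (Mpq a sa) bisector_reflection_fix // Mpc_dist.
Qed.

Lemma sqdist_line_first A B k : sqdist (A + k *: (B - A)) A = k ^+ 2 * sqdist A B.
Proof. by rewrite /sqdist mulr_sumr; apply: eq_bigr => i _; rewrite !mxE; ring. Qed.

Lemma sqdist_line_second A B k :
  sqdist (A + k *: (B - A)) B = (1 - k) ^+ 2 * sqdist A B.
Proof. by rewrite /sqdist mulr_sumr; apply: eq_bigr => i _; rewrite !mxE; ring. Qed.

Lemma sqdist_add_const A k : sqdist (A + const_mx k) A = k ^+ 2 * d%:R.
Proof.
rewrite /sqdist (eq_bigr (fun _ => k ^+ 2)) ?sumr_const ?card_ord ?mulr_natr //.
by move=> i _; rewrite !mxE addrAC subrr add0r.
Qed.

Lemma sqdist_sqrt A B : sqdist A B = Num.sqrt (sqdist A B) ^+ 2.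
Proof. by rewrite sqr_sqrtr // sqdist_ge0. Qed.

Lemma exists_point_between A B a b : 0 <= a -> 0 <= b ->
  a + b = Num.sqrt (sqdist A B) ->
  exists w, sqdist w A = a ^+ 2 /\ sqdist w B = b ^+ 2.
Proof.
set s := Num.sqrt _ => a_ge0 b_ge0 ab_s.
have [s0 | s_neq0] := eqVneq s 0.
  have [a0 b0] : a = 0 /\ b = 0 by lra.
  have AB : A = B by apply: sqdist_eq0; rewrite sqdist_sqrt -/s s0 expr0n.
  by exists A; rewrite -AB sqdistxx a0 b0 expr0n.
exists (A + (a / s) *: (B - A)).
rewrite sqdist_line_first sqdist_line_second sqdist_sqrt -/s.
have -> : b = s - a by lra.
by split; field.
Qed.

Lemma exists_point_beyond A B a b : (0 < d)%N -> 0 <= a ->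
  b = a + Num.sqrt (sqdist A B) ->
  exists w, sqdist w A = a ^+ 2 /\ sqdist w B = b ^+ 2.
Proof.
set s := Num.sqrt _ => d_gt0 a_ge0 ->.
have [s0 | s_neq0] := eqVneq s 0.
  have AB : A = B by apply: sqdist_eq0; rewrite sqdist_sqrt -/s s0 expr0n.
  set sd := Num.sqrt (d%:R : R).
  have sd_neq0 : sd != 0 by rewrite sqrtr_eq0 -ltNge ltr0n.
  have sd2 : (d%:R : R) = sd ^+ 2 by rewrite sqr_sqrtr ?ler0n.
  exists (A + const_mx (a / sd)).
  by rewrite -AB sqdist_add_const s0 addr0 sd2; split; field.
exists (A + (- a / s) *: (B - A)).
by rewrite sqdist_line_first sqdist_line_second sqdist_sqrt -/s; split; field.
Qed.

(* Place [w1] on the line [A1 B1] beyond [A1] and [w3] inside the segment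
   [A3 B3], at the distances (s3 - s1)/2 and (s3 + s1)/2 from the endpoints. *)
Lemma exists_equidistant_pair A1 B1 A3 B3 : (0 < d)%N ->
  sqdist A1 B1 <= sqdist A3 B3 ->
  exists w1 w3, sqdist w1 A1 = sqdist w3 A3 /\ sqdist w1 B1 = sqdist w3 B3.
Proof.
move=> d_gt0 le13.
set s1 := Num.sqrt (sqdist A1 B1); set s3 := Num.sqrt (sqdist A3 B3).
have s1_ge0 : 0 <= s1 by apply: sqrtr_ge0.
have s13 : s1 <= s3 by rewrite ler_sqrt // sqdist_ge0.
have [w3 [w3A w3B]] := @exists_point_between A3 B3 ((s3 - s1) / 2) ((s3 + s1) / 2)
  ltac:(lra) ltac:(lra) ltac:(rewrite -/s3; lra).
have [w1 [w1A w1B]] := @exists_point_beyond A1 B1 ((s3 - s1) / 2) ((s3 + s1) / 2)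
  d_gt0 ltac:(lra) ltac:(rewrite -/s1; lra).
by exists w1, w3; rewrite w1A w1B w3A w3B.
Qed.

End EuclideanGeometry.

Section CliqueComponents.
Variables (V : finType) (H : rel V) (C : {set V}).
Hypothesis H_sym : symmetric H.

Local Notation e := (del_verts H C).
Local Notation rootC := (fingraph.root e).
Local Notation K x := (Ccomp H C x).

Lemma del_verts_sym : symmetric e.
Proof. by move=> a b; rewrite /del_verts H_sym [(a \notin C) && _]andbC. Qed.

Lemma del_verts_connect_sym : connect_sym e.
Proof. exact: sym_connect_sym del_verts_sym. Qed.

Lemma connect_from_C c a : c \in C -> connect e c a -> a = c.
Proof.
by move=> cC /connectP [[|b p] //= /andP [] ]; rewrite /del_verts cC andbF.
Qed.

Lemma connect_notin_C a b : a \notin C -> connect e a b -> b \notin C.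
Proof.
move=> aC ab; apply: contra aC => bC.
by rewrite del_verts_connect_sym in ab; rewrite (connect_from_C bC ab).
Qed.

Lemma sub_Ccomp x : {subset C <= K x}.
Proof. by move=> c cC; rewrite !inE cC orbT. Qed.

Lemma root_notin_C a : a \notin C -> rootC a \notin C.
Proof. by move=> aC; apply: connect_notin_C aC (connect_root _ _). Qed.

Lemma mem_Ccomp_root a : a \in K (rootC a).
Proof. by rewrite !inE del_verts_connect_sym connect_root. Qed.

Lemma Ccomp_edge a b : H a b -> a \notin C -> b \in K (rootC a).
Proof.
move=> ab aC; case: (boolP (b \in C)) => [bC | bC]; first exact: sub_Ccomp.
rewrite !inE; apply/orP; left; apply: connect_trans (connect1 (_ : e a b)).
  by rewrite del_verts_connect_sym connect_root.
by rewrite /del_verts ab aC bC.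
Qed.

Lemma root_Ccomp y b : rootC y = y -> b \in K y -> b \notin C -> rootC b = y.
Proof.
move=> ry; rewrite !inE => /orP [yb _ | -> //].
by rewrite -ry; apply/esym/(fingraph.rootP del_verts_connect_sym).
Qed.

Lemma Ccomp_out x a b : a \notin K x -> b \in K x -> H a b -> b \in C.
Proof.
move=> aK bK ab; apply: contraT => bC.
have aC : a \notin C by apply: contra aK; apply: sub_Ccomp.
have xb : connect e x b by move: bK; rewrite !inE (negbTE bC) orbF.
case/negP: aK; rewrite !inE; apply/orP; left; apply: connect_trans xb (connect1 _).
by rewrite /del_verts H_sym ab aC bC.
Qed.

Lemma edge_in_Ccomp x0 a b : x0 \notin C -> H a b ->
  exists y, [/\ y \notin C, rootC y = y, a \in K y & b \in K y].
Proof.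
have root_K z : z \notin C -> [/\ rootC z \notin C, rootC (rootC z) = rootC z & z \in K (rootC z)].
  by move=> zC; rewrite root_notin_C ?mem_Ccomp_root ?root_root //; apply: del_verts_connect_sym.
move=> x0C ab; case: (boolP (a \in C)) => aC; last first.
  by have [? ? ?] := root_K a aC; exists (rootC a); split => //; apply: Ccomp_edge.
case: (boolP (b \in C)) => bC; last first.
  by have [? ? ?] := root_K b bC; exists (rootC b); split => //; apply: Ccomp_edge; rewrite // H_sym.
by have [? ? _] := root_K x0 x0C; exists (rootC x0); split => //; apply: sub_Ccomp.
Qed.

End CliqueComponents.

Definition uv_pair (V : eqType) (u v a b : V) := ((a == u) && (b == v)) || ((a == v) && (b == u)).

Lemma add_edge_sym (V : finType) (adj : rel V) u v :
  symmetric adj -> symmetric (add_edge adj u v).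
Proof.
move=> adj_sym a b; rewrite /add_edge adj_sym; congr (_ || _).
by rewrite orbC [(b == u) && _]andbC [(b == v) && _]andbC.
Qed.

Section CliqueSeparatorSIP.
Variables (R : realType) (d : nat) (V : finType) (adj : rel V) (u v : V) (C : {set V}).
Hypotheses (adj_sym : symmetric adj) (uv_nonedge : ~~ adj u v).

Local Notation H := (add_edge adj u v).
Local Notation rootC := (fingraph.root (del_verts H C)).
Local Notation K x := (Ccomp H C x).
Local Notation E S := (induced_del H S u v).
Implicit Types (l : V -> V -> R) (p q : V -> 'rV[R]_d).

Let H_sym : symmetric H := add_edge_sym u v adj_sym.

Lemma induced_delE S a b : E S a b = [&& a \in S, b \in S & adj a b].
Proof.
rewrite /induced_del /add_edge -/(uv_pair u v a b).
case ab: (adj a b) => /=; last by rewrite andbN !andbF.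
suff -> : ~~ uv_pair u v a b by [].
apply/negP => /orP [] /andP [/eqP au /eqP bv]; move: ab; rewrite au bv.
  by rewrite (negbTE uv_nonedge).
by rewrite adj_sym (negbTE uv_nonedge).
Qed.

Lemma realization_induced_del S l p :
  realization [set: V] adj l p -> realization S (E S) l p.
Proof. by move=> rp a b aS bS; rewrite induced_delE => /and3P [_ _]; apply: rp; rewrite inE. Qed.

Lemma clique_sqdist_agree (S1 S3 : {set V}) l q1 q3 : is_clique H C ->
  {subset C <= S1} -> {subset C <= S3} ->
  realization S1 (E S1) l q1 -> realization S3 (E S3) l q3 ->
  {in C &, forall a b, ~~ uv_pair u v a b -> sqdist (q1 a) (q1 b) = sqdist (q3 a) (q3 b)}.
Proof.
move=> clq CS1 CS3 r1 r3 a b aC bC not_uv.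
have [<- | ab] := eqVneq a b; first by rewrite !sqdistxx.
have adj_ab : adj a b.
  by case/orP: (clq a b aC bC ab) => // uv_ab; case/negP: not_uv; exact: uv_ab.
by rewrite r1 ?r3 ?induced_delE ?CS1 ?CS3.
Qed.

Lemma exists_equidistant_to_clique q1 q3 : (0 < d)%N ->
  {in C &, forall a b, ~~ uv_pair u v a b -> sqdist (q1 a) (q1 b) = sqdist (q3 a) (q3 b)} ->
  sqdist (q1 u) (q1 v) <= sqdist (q3 u) (q3 v) ->
  exists w1 w3, {in C, forall c, sqdist w1 (q1 c) = sqdist w3 (q3 c)}.
Proof.
move=> d_gt0 agree le13.
case: (pickP [pred c in C | (c != u) && (c != v)]) => [c0 /and3P [c0C c0u c0v] | only_uv].
  exists (q1 c0), (q3 c0) => c cC; apply: agree => //.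
  by rewrite /uv_pair (negbTE c0u) (negbTE c0v).
have C_uv c : c \in C -> (c == u) || (c == v).
  by move=> cC; move: (only_uv c); rewrite /= cC /= -negb_or => /negbFE.
case: (boolP ((u \in C) && (v \in C))) => [_ | not_both].
  have [w1 [w3 [w13u w13v]]] := exists_equidistant_pair d_gt0 le13.
  by exists w1, w3 => c /C_uv /orP [] /eqP ->.
pose z := if u \in C then u else v.
have C_z c : c \in C -> c = z.
  move=> cC; rewrite /z; have /orP [/eqP cu | /eqP cv] := C_uv c cC.
    by rewrite -cu cC.
  by case: ifP => // uC; move: not_both; rewrite uC -cv cC.
by exists (q1 z), (q3 z) => c /C_z ->; rewrite !sqdistxx.
Qed.

Definition extend_by (S : {set V}) p w a := if a \in S then p a else w.

Definition extend_length (S : {set V}) l p a b :=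
  if (a \in S) && (b \in S) then l a b else sqdist (p a) (p b).

Lemma realization_extend_by x l q w q1 w1 :
  realization (K x) (E (K x)) l q ->
  {in C, forall c, sqdist w1 (q1 c) = sqdist w (q c)} ->
  realization [set: V] adj (extend_length (K x) l (extend_by (K x) q1 w1))
    (extend_by (K x) q w).
Proof.
move=> rq qw a b _ _ ab; rewrite /extend_length /extend_by.
have out_C z y : z \notin K x -> y \in K x -> adj z y -> y \in C.
  by move=> zK yK zy; apply: (Ccomp_out H_sym zK yK); rewrite /add_edge zy.
case aK: (a \in K x); case bK: (b \in K x) => /=.
- by apply: rq; rewrite ?induced_delE ?aK ?bK.
- rewrite sqdistC [sqdist (q1 a) _]sqdistC -qw //.
  by apply: out_C (negbT bK) aK _; rewrite adj_sym.
- by rewrite -qw //; apply: out_C (negbT aK) bK ab.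
- by rewrite !sqdistxx.
Qed.

Lemma Ccomp_SIP_of_SIP : (0 < d)%N -> is_clique H C -> SIP R d [set: V] adj u v ->
  forall x, u \in K x -> v \in K x -> SIP R d (K x) (E (K x)) u v.
Proof.
move=> d_gt0 clq sipG x uK vK l l_sym l_ge0 t1 t3 t [q1 [r1 <-]] [q3 [r3 <-]] le1t let3.
have [w1 [w3 w13]] := exists_equidistant_to_clique d_gt0
  (clique_sqdist_agree clq (sub_Ccomp H x) (sub_Ccomp H x) r1 r3)
  (le_trans le1t let3).
set l' := extend_length (K x) l (extend_by (K x) q1 w1).
have l'_sym a b : l' a b = l' b a.
  by rewrite /l' /extend_length andbC; case: ifP => _; [apply: l_sym | apply: sqdistC].
have l'_ge0 a b : 0 <= l' a b.
  by rewrite /l' /extend_length; case: ifP => _; rewrite ?l_ge0 ?sqdist_ge0.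
have Om1 : Omega d [set: V] adj l' u v (sqdist (q1 u) (q1 v)).
  exists (extend_by (K x) q1 w1); rewrite /extend_by uK vK; split => //.
  exact: realization_extend_by r1 (fun _ _ => erefl).
have Om3 : Omega d [set: V] adj l' u v (sqdist (q3 u) (q3 v)).
  exists (extend_by (K x) q3 w3); rewrite /extend_by uK vK; split => //.
  exact: realization_extend_by r3 w13.
have [P [rP eP]] := sipG l' l'_sym l'_ge0 _ _ t Om1 Om3 le1t let3.
exists P; split => // a b aK bK; rewrite induced_delE => /and3P [_ _ ab].
by rewrite rP ?inE // /l' /extend_length aK bK.
Qed.

Definition Ccomp_realization l t y q :=
  realization (K y) (E (K y)) l q /\ (u \in K y -> v \in K y -> sqdist (q u) (q v) = t).

Lemma Ccomp_realization_isometry l t y q T :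
  isometry T -> Ccomp_realization l t y q -> Ccomp_realization l t y (T \o q).
Proof.
move=> isoT [rq qt]; split => [a b aK bK ab | uK vK] /=; rewrite isoT; first exact: rq.
exact: qt.
Qed.

Lemma Ccomp_realization_agree_on_C l t y z q r : is_clique H C ->
  Ccomp_realization l t y q -> Ccomp_realization l t z r ->
  {in C &, forall a b, sqdist (q a) (q b) = sqdist (r a) (r b)}.
Proof.
move=> clq [rq qt] [rr rt] a b aC bC.
case: (boolP (uv_pair u v a b)) => [/orP [] /andP [/eqP ab_u /eqP ab_v] | not_uv].
- subst a b; rewrite qt ?rt //; exact: sub_Ccomp.
- subst a b; rewrite [LHS]sqdistC [RHS]sqdistC qt ?rt //; exact: sub_Ccomp.
exact: clique_sqdist_agree clq (sub_Ccomp H y) (sub_Ccomp H z) rq rr a b aC bC not_uv.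
Qed.

Lemma exists_aligned_Ccomp_realization l t y z q r : is_clique H C ->
  Ccomp_realization l t y q -> Ccomp_realization l t z r ->
  exists2 q', Ccomp_realization l t y q' & {in C, q' =1 r}.
Proof.
move=> clq Rq Rr.
have agree : {in enum C &, forall a b, sqdist (q a) (q b) = sqdist (r a) (r b)}.
  by move=> a b; rewrite !mem_enum; apply: (Ccomp_realization_agree_on_C clq Rq Rr).
have [T isoT Tqr] := isometry_extension agree.
exists (T \o q); first exact: Ccomp_realization_isometry.
by move=> c cC /=; rewrite Tqr ?mem_enum.
Qed.

(* Components are glued along the common placement [r] of the clique; each
   vertex outside [C] is placed by the component of its root. *)
Lemma glue_Ccomp_realizations l t r (Q : V -> V -> 'rV[R]_d) x0 :
  x0 \notin C ->
  (forall y, y \notin C -> Ccomp_realization l t y (Q y) /\ {in C, Q y =1 r}) ->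
  exists p, realization [set: V] adj l p /\ sqdist (p u) (p v) = t.
Proof.
move=> x0C RQ.
pose p a := if a \in C then r a else Q (rootC a) a.
have p_Q y : y \notin C -> rootC y = y -> {in K y, p =1 Q y}.
  move=> yC ry a aK; rewrite /p; case: ifP => [aC | /negbT aC].
    by rewrite (proj2 (RQ y yC) a aC).
  by rewrite (root_Ccomp H_sym ry aK aC).
have in_comp a b : H a b -> exists y, [/\ y \notin C, {in K y, p =1 Q y} & (a \in K y) && (b \in K y)].
  move=> ab; have [y [yC ry aK bK]] := edge_in_Ccomp H_sym x0C ab.
  by exists y; rewrite aK bK; split => //; apply: p_Q.
exists p; split => [a b _ _ ab | ].
  have [y [yC pQ /andP [aK bK]]] := in_comp a b ltac:(by rewrite /add_edge ab).
  have [[rQ _] _] := RQ y yC.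
  by rewrite !pQ // rQ ?induced_delE ?aK ?bK.
have [y [yC pQ /andP [uK vK]]] := in_comp u v ltac:(by rewrite /add_edge !eqxx orbT).
have [[_ Quv] _] := RQ y yC.
by rewrite !pQ // Quv.
Qed.

Lemma exists_Ccomp_realization l t t1 t3 y :
  (u \in K y -> v \in K y -> convexR (Omega d (K y) (E (K y)) l u v)) ->
  Omega d [set: V] adj l u v t1 -> Omega d [set: V] adj l u v t3 ->
  t1 <= t -> t <= t3 -> exists q, Ccomp_realization l t y q.
Proof.
move=> convK [p1 [r1 e1]] [p3 [r3 e3]] le1 le3.
have restrict p := @realization_induced_del (K y) l p.
case: (boolP ((u \in K y) && (v \in K y))) => [/andP [uK vK] | not_uvK].
  have [q [rq qt]] := convK uK vK t1 t3 t
    (ex_intro _ p1 (conj (restrict p1 r1) e1)) (ex_intro _ p3 (conj (restrict p3 r3) e3)) le1 le3.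
  by exists q.
by exists p1; split => [|uK vK]; [apply: restrict | rewrite uK vK in not_uvK].
Qed.

Lemma SIP_of_Ccomp_SIP x0 : is_clique H C -> x0 \notin C ->
  (forall x, x \notin C -> u \in K x -> v \in K x -> SIP R d (K x) (E (K x)) u v) ->
  SIP R d [set: V] adj u v.
Proof.
move=> clq x0C sipK l l_sym l_ge0 t1 t3 t Om1 Om3 le1 le3.
have realK y : exists q, y \notin C -> Ccomp_realization l t y q.
  case: (boolP (y \in C)) => yC; first by exists (fun=> 0).
  have convK uK vK := sipK y yC uK vK l l_sym l_ge0.
  by have [q Rq] := exists_Ccomp_realization convK Om1 Om3 le1 le3; exists q.
have [Q0 RQ0] := fin_all_exists realK.
have alignedK y : exists q, y \notin C -> Ccomp_realization l t y q /\ {in C, q =1 Q0 x0}.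
  case: (boolP (y \in C)) => yC; first by exists (fun=> 0).
  by have [q Rq qQ0] := exists_aligned_Ccomp_realization clq (RQ0 y yC) (RQ0 x0 x0C); exists q.
have [Q RQ] := fin_all_exists alignedK.
exact: glue_Ccomp_realizations x0C RQ.
Qed.

End CliqueSeparatorSIP.

Theorem mainTheorem8 (R : realType) (d : nat) (V : finType) (adj : rel V)
  (u v : V) (C : {set V}) :
  (1 <= d)%N ->
  symmetric adj -> irreflexive adj ->
  u != v -> ~~ adj u v ->
  clique_separator (add_edge adj u v) C ->
  (SIP R d [set: V] adj u v <->
   forall x, x \notin C ->
     u \in Ccomp (add_edge adj u v) C x -> v \in Ccomp (add_edge adj u v) C x ->
     SIP R d (Ccomp (add_edge adj u v) C x)
       (induced_del (add_edge adj u v) (Ccomp (add_edge adj u v) C x) u v) u v).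
Proof.
move=> d_gt0 adj_sym _ _ uv_nonedge [clq [x0 [_ [x0C _ _]]]]; split.
  by move=> sipG x _; apply: Ccomp_SIP_of_SIP.
exact: (SIP_of_Ccomp_SIP adj_sym uv_nonedge clq x0C).
Qed.
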